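(* There exists a constant $r_{m,1}>0$ depending only on $m$ such that for $P$-a.e. $\omega$ there exists $N_2(\omega)\in\mathbb N$ such that for every $n>N_2(\omega)$, $C_{Q_n(\omega)}\subset[-r_{m,1},r_{m,1}]$.
   Context: Fix $m>1/2$. Let $c_m:=\left(\int_{\mathbb R}(1+x^2)^{-m}dx\right)^{-1}$ and let $\nu_m(dx):=c_m(1+x^2)^{-m}dx$ (the Pearson Type VII law $\mathrm{PVII}_m(0,1)$). Let $(X_n)_{n\ge1}$ be i.i.d. random variables on $(\Omega,\mathcal F,P)$ with law $\nu_m$. For $t\in\mathbb R$ let $L_n(t):=\frac1n\sum_{i=1}^n\log(1+(X_i-t)^2)$. Let $Q_n(\omega):=\frac1n\sum_{i=1}^n\delta_{X_i(\omega)}$ be the empirical distribution and $C_{Q_n(\omega)}:=\{t\in\mathbb R: L_n(t)(\omega)=\min_{s\in\mathbb R}L_n(s)(\omega)\}$ the set of minimizers of $L_n(\cdot)(\omega)$ (the Fréchet mean set). *)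

From HB Require Import structures.
From mathcomp Require Import all_boot all_order all_algebra.
From mathcomp Require Import all_classical all_reals all_analysis.
Set Implicit Arguments. Unset Strict Implicit. Unset Printing Implicit Defensive.
Import Order.TTheory GRing.Theory Num.Theory.
Import numFieldNormedType.Exports.
Local Open Scope classical_set_scope.
Local Open Scope ring_scope.

Section defs.
Variable R : realType.

Definition pvii_density (m x : R) : R := powR (1 + x ^+ 2) (- m).

Definition pvii_const (m : R) : R :=
  (fine (\int[@lebesgue_measure R]_x (pvii_density m x)%:E))^-1.

Definition pvii_law (m : R) (A : set R) : \bar R :=
  ((pvii_const m)%:E * \int[@lebesgue_measure R]_(x in A) (pvii_density m x)%:E)%E.

Definition mutually_independent d (T : measurableType d)
    (P : probability T R) (X : nat -> T -> R) : Prop :=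
  forall (s : seq nat) (A : nat -> set R), uniq s ->
    (forall i, measurable (A i)) ->
    P (\big[setI/setT]_(i <- s) (X i @^-1` A i)) =
    (\prod_(i <- s) P (X i @^-1` A i))%E.

(* L_n(t)(w) = 1/n sum_{i=1}^n log(1+(X_i(w)-t)^2); X_1..X_n are X 0 .. X (n-1) *)
Definition emp_loss T (X : nat -> T -> R) (n : nat) (t : R) (w : T) : R :=
  n%:R^-1 * \sum_(i < n) ln (1 + (X i w - t) ^+ 2).

Definition frechet_mean_set T (X : nat -> T -> R) (n : nat) (w : T) : set R :=
  [set t | forall s, emp_loss X n t w <= emp_loss X n s w].

End defs.

From HB Require Import structures.
From mathcomp Require Import all_boot all_order all_algebra.
From mathcomp Require Import all_classical all_reals all_analysis.
From mathcomp Require Import ring lra.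
Import Order.TTheory GRing.Theory Num.Theory.
Import numFieldNormedType.Exports.
Local Open Scope classical_set_scope.
Local Open Scope ring_scope.

(* If |t| > 4 (1 + K^2), every sample with |X_i| <= K satisfies
   ln (1 + (X_i - t)^2) >= ln (1 + X_i^2) + ln (1 + t^2) - ln (4 (1 + K^2)),
   while by Peetre's inequality no sample loses more than ln (1 + t^2) + ln 2.
   Hence as soon as at most a quarter of X_1, ..., X_n exceed K in absolute
   value, L_n(t) > L_n(0) and t is not a minimiser.  Choose K with
   nu_m(|x| > K) <= 2^-8: by independence and a union bound over the index
   sets, more than a quarter of the first n samples exceed K with probability
   at most 2^n 2^(-2(n+1)), which is summable, so by Borel-Cantelli this
   happens for only finitely many n, almost surely. *)

Section empirical_loss_bounds.
Variable R : realType.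
Implicit Types (x t K : R).

Lemma oneDsqr_gt0 x : 0 < 1 + x ^+ 2.
Proof. by have := sqr_ge0 x; lra. Qed.

Lemma lnD_le (a b c d : R) : 0 < a -> 0 < b -> 0 < c -> 0 < d ->
  a * b <= c * d -> ln a + ln b <= ln c + ln d.
Proof.
by move=> a0 b0 c0 d0 abcd; rewrite -!lnM ?posrE // ler_ln ?posrE ?mulr_gt0.
Qed.

Lemma ln_peetre x t :
  ln (1 + x ^+ 2) <= ln (1 + (x - t) ^+ 2) + ln (1 + t ^+ 2) + ln 2.
Proof.
have peetre : (1 + x ^+ 2) * 1 <= (1 + (x - t) ^+ 2) * ((1 + t ^+ 2) * 2).
  by have := sqr_ge0 (x - t - t); have := sqr_ge0 ((x - t) * t); nra.
have := @lnD_le _ _ _ _ (oneDsqr_gt0 x) ltr01 (oneDsqr_gt0 (x - t))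
  (mulr_gt0 (oneDsqr_gt0 t) (ltr0Sn _ 1)) peetre.
by rewrite ln1 addr0 lnM ?posrE ?oneDsqr_gt0 // addrA.
Qed.

Lemma ln_shift_far K x t : `|x| <= K -> 2 * K <= `|t| ->
  ln (1 + x ^+ 2) + ln (1 + t ^+ 2) <=
  ln (1 + (x - t) ^+ 2) + ln (4 * (1 + K ^+ 2)).
Proof.
move=> xK tK.
have half_t : `|t| / 2 <= `|x - t|.
  rewrite distrC; apply: le_trans (ler_dist_dist t x).
  apply: le_trans (ler_norm _); lra.
have xt2 : t ^+ 2 <= 4 * (x - t) ^+ 2.
  rewrite -(real_normK (num_real (x - t))) -(real_normK (num_real t)).
  have := normr_ge0 t; nra.
have x2 : x ^+ 2 <= K ^+ 2.
  rewrite -(real_normK (num_real x)); have := normr_ge0 x; nra.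
apply: lnD_le; rewrite ?oneDsqr_gt0 ?mulr_gt0 ?oneDsqr_gt0 //.
have := sqr_ge0 x; have := sqr_ge0 t; have := sqr_ge0 K; nra.
Qed.

Lemma sum_ln_shift_gt K t n (x : 'I_n -> R) : (0 < n)%N ->
  (4 * #|[set i | (K < `|x i|)%R]%SET| <= n)%N -> 4 * (1 + K ^+ 2) < `|t| ->
  \sum_i ln (1 + x i ^+ 2) < \sum_i ln (1 + (x i - t) ^+ 2).
Proof.
move=> n_gt0 few_far t_far.
set S := [set i | (K < `|x i|)%R]%SET.
set C := ln (4 * (1 + K ^+ 2)); set L := ln (1 + t ^+ 2).
have ln2_le_C : ln 2 <= C.
  by rewrite ler_ln ?posrE ?mulr_gt0 ?oneDsqr_gt0 //; have := sqr_ge0 K; lra.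
have ln2_ge0 : 0 <= ln 2 :> R by rewrite ln_ge0 //; lra.
have C_lt_L : 2 * C < L.
  rewrite mulr_natl -lnXn ?mulr_gt0 ?oneDsqr_gt0 //.
  rewrite ltr_ln ?posrE ?oneDsqr_gt0 ?exprn_gt0 ?mulr_gt0 ?oneDsqr_gt0 //.
  rewrite -(real_normK (num_real t)).
  have := sqr_ge0 K; have := normr_ge0 t; nra.
have term i : ln (1 + x i ^+ 2) + (L - C) - (if i \in S then 2 * L else 0)
    <= ln (1 + (x i - t) ^+ 2).
  case: ifP => iS.
    by have := ln_peetre (x i) t; rewrite -/L; lra.
  have xK : `|x i| <= K by move: iS; rewrite inE => /negbT; rewrite -leNgt.
  have tK : 2 * K <= `|t| by have := sqr_ge0 (K - 1); have := normr_ge0 t; nra.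
  by have := @ln_shift_far K (x i) t xK tK; rewrite -/C -/L; lra.
apply: lt_le_trans (ler_sum _ (fun i _ => term i)).
rewrite sumrB big_split /= sumr_const card_ord -big_mkcond /= sumr_const.
rewrite -[_ *+ n]mulr_natr -[_ *+ #|S|]mulr_natr.
have : (4 * #|S|)%:R <= n%:R :> R by rewrite ler_nat.
have : 1 <= n%:R :> R by rewrite ler1n.
rewrite natrM; have : 0 <= #|S|%:R :> R by [].
move: #|S|%:R n%:R => s k s_ge0 k_ge1 four_s_le_k.
have C_ge0 : 0 <= C by lra.
(* [k (L - C) - 2 L s = L (k - 4 s) / 2 + k (L - 2 C) / 2] *)
have : 0 <= L * (k - 4 * s) by rewrite mulr_ge0 //; lra.
have : 0 < k * (L - 2 * C) by rewrite mulr_gt0 //; lra.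
lra.
Qed.

Lemma frechet_mean_set_sub_itv T (X : nat -> T -> R) K n w : (0 < n)%N ->
  (4 * #|[set i : 'I_n | (K < `|X i w|)%R]%SET| <= n)%N ->
  frechet_mean_set X n w `<=` `[- (4 * (1 + K ^+ 2)), 4 * (1 + K ^+ 2)].
Proof.
move=> n_gt0 few_far t t_min.
rewrite /= in_itv /= -ler_norml leNgt; apply/negP => t_far.
have := t_min 0; rewrite /emp_loss ler_pM2l ?invr_gt0 ?ltr0n //.
under [X in _ <= X]eq_bigr do rewrite subr0.
by rewrite leNgt (@sum_ln_shift_gt K t n (fun i => X i w) n_gt0 few_far t_far).
Qed.

End empirical_loss_bounds.

Section tail_bounds.
Context {R : realType}.

Lemma measurable_norm_gt (K : R) : measurable [set x : R | K < `|x|].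
Proof.
have := @measurable_realfun.normr_measurable R setT measurableT _
  (measurable_itv `]K, +oo[).
by rewrite setTI; congr measurable; apply/seteqP; split => x /=;
  rewrite in_itv /= andbT.
Qed.

Lemma tail_prob_small {d} {T : measurableType d} (P : probability T R)
    {Y : T -> R} {e : R} : measurable_fun setT Y -> 0 < e ->
  exists K : R, (P (Y @^-1` [set x | (K < `|x|)%R]) <= e%:E)%E.
Proof.
move=> mY e_gt0; pose F k := Y @^-1` [set x : R | k%:R < `|x|].
have mF k : measurable (F k).
  by have := mY measurableT _ (measurable_norm_gt k%:R); rewrite setTI.
have F_fin k : P (F k) \is a fin_num.
  rewrite ge0_fin_numE ?measure_ge0 //.
  by rewrite (le_lt_trans (probability_le1 _ _)) ?ltry.
have capF0 : \bigcap_k F k = set0.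
  apply/seteqP; split => // w /= /(_ (Num.truncn `|Y w|).+1 I).
  by rewrite /F /= ltNge (ltW (truncnS_gt _)).
have PF_cvg : (P \o F) @ \oo --> P (\bigcap_k F k).
  apply: nonincreasing_cvg_mu => //.
  - by rewrite (le_lt_trans (probability_le1 _ _)) ?ltry.
  - exact: bigcapT_measurable.
  - move=> a b ab; rewrite subsetEset => w /=; apply: le_lt_trans.
    by rewrite ler_nat.
rewrite capF0 measure0 in PF_cvg.
have /cvgr_lt/(_ e e_gt0)[N _ PF_lt] : (fine \o (P \o F)) k @[k --> \oo] --> 0.
  exact: fine_cvg.
exists N%:R; rewrite -(fineK (F_fin N)) lee_fin.
exact: ltW (PF_lt N (leqnn N)).
Qed.

End tail_bounds.

Lemma measure_bigsetU_le {d} {T : measurableType d} {R : realType}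
    (mu : {measure set T -> \bar R}) {I : Type} (s : seq I) (p : pred I)
    (F : I -> set T) : (forall i, measurable (F i)) ->
  (mu (\big[setU/set0]_(i <- s | p i) F i) <= \sum_(i <- s | p i) mu (F i))%E.
Proof.
move=> mF; elim: s => [|a s IH]; first by rewrite !big_nil measure0.
rewrite !big_cons; case: (p a) => //=.
have mU : measurable (\big[setU/set0]_(i <- s | p i) F i).
  exact: bigsetU_measurable.
apply: le_trans (measureU2 mu (mF a) mU) _.
exact: leeD.
Qed.

Lemma prode_le_expr (R : realDomainType) (I : Type) (s : seq I)
    (f : I -> \bar R) (e : R) : (forall i, 0 <= f i <= e%:E)%E ->
  (\prod_(i <- s) f i <= (e ^+ size s)%:E)%E.
Proof.
move=> f_bnd; elim: s => [|a s IH]; first by rewrite big_nil expr0.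
have /andP[fa_ge0 fa_le] := f_bnd a.
rewrite big_cons exprS EFinM lee_pmul //.
by apply: prode_ge0 => i _; case/andP: (f_bnd i).
Qed.

Section frequent_hits.
Context {d} {T : measurableType d} {R : realType} {P : probability T R}.
Context {X : nat -> T -> R} {B : set R}.
Hypotheses (mX : forall i, measurable_fun setT (X i)) (mB : measurable B).
Hypothesis indX : mutually_independent P X.
Hypothesis hitB : forall i, (P (X i @^-1` B) <= ((2^-1) ^+ 8)%:E)%E.

Let mXB i : measurable (X i @^-1` B).
Proof. by have := mX i measurableT _ mB; rewrite setTI. Qed.

Lemma hit_all_prob_le {n} (S : {set 'I_n}) :
  (P (\big[setI/setT]_(i in S) X i @^-1` B) <= ((2^-1) ^+ (8 * #|S|))%:E)%E.
Proof.
rewrite -big_enum -(big_map val xpredT (fun j => X j @^-1` B)).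
rewrite indX ?(map_inj_uniq val_inj) ?enum_uniq //.
rewrite exprM cardE -(size_map val); apply: prode_le_expr => i.
by rewrite measure_ge0 hitB.
Qed.

Definition frequent_hits n : set T :=
  \big[setU/set0]_(S : {set 'I_n} | (n < 4 * #|S|)%N)
    \big[setI/setT]_(i in S) X i @^-1` B.

Lemma frequent_hits_measurable n : measurable (frequent_hits n).
Proof.
by apply: bigsetU_measurable => S _; apply: bigsetI_measurable => i _.
Qed.

Lemma frequent_hits_prob_le n : (P (frequent_hits n) <= ((2^-1) ^+ n.+1)%:E)%E.
Proof.
have half_ge0 : 0 <= 2^-1 :> R by rewrite invr_ge0.
have half_le1 : 2^-1 <= 1 :> R by rewrite invf_le1 // ler1n.
have mI (S : {set 'I_n}) : measurable (\big[setI/setT]_(i in S) X i @^-1` B).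
  exact: bigsetI_measurable.
apply: (le_trans (measure_bigsetU_le P _ _ _ mI)).
apply: (@le_trans _ _ (\sum_(S : {set 'I_n}) ((2^-1) ^+ (n.+1 + n.+1))%:E)%E).
  rewrite [leRHS](bigID (fun S : {set 'I_n} => (n < 4 * #|S|)%N)) /=.
  rewrite -[leLHS]adde0 leeD //; last first.
    by rewrite sume_ge0 // => S _; rewrite lee_fin exprn_ge0.
  apply: lee_sum => S few_S; apply: le_trans (hit_all_prob_le S) _.
  by rewrite lee_fin ler_wiXn2l // (leq_trans (leq_add few_S few_S)) // -mulnDl.
rewrite sumEFin lee_fin sumr_const.
rewrite -cardsT -powersetT card_powerset cardsT card_ord.
rewrite -[_ *+ _]mulr_natr exprD natrX -mulrA ler_piMr ?exprn_ge0 //.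
by rewrite exprSr mulrAC -exprMn mulVf // expr1n mul1r.
Qed.

Lemma frequent_hits_summable : (\sum_(n <oo) P (frequent_hits n) < +oo)%E.
Proof.
have geo := @cvg_geometric_eseries_half R 1 0.
rewrite (_ : (fun k => _) = (fun k => ((2^-1 : R) ^+ k.+1)%:E)) in geo;
  last first.
  by apply/funext => k; rewrite natrX addn1 div1r exprVn.
apply: le_lt_trans (@lee_nneseries R _ _ xpredT 0 (fun n _ _ => measure_ge0 P _)
  (fun n _ => frequent_hits_prob_le n)) _.
by rewrite (cvg_lim _ geo) ?ltry.
Qed.

Lemma ae_eventually_rare_hits : {ae P, forall w, exists N, forall n,
  (N < n)%N -> (4 * #|[set i : 'I_n | X i w \in B]%SET| <= n)%N}.
Proof.
exists (lim_sup_set frequent_hits); split.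
- by apply: bigcapT_measurable => n; apply: bigcup_measurable => k _;
    exact: frequent_hits_measurable.
- exact: lim_sup_set_cvg0 frequent_hits_measurable frequent_hits_summable.
- move=> w /= not_rare; apply: contrapT => not_limsup; apply: not_rare.
  have [N N_rare] : exists N, forall n, (N <= n)%N -> ~ frequent_hits n w.
    apply: contrapT => often; apply: not_limsup => N _.
    apply: contrapT => never; apply: often; exists N => n Nn hits.
    by apply: never; exists n.
  exists N => n Nn; rewrite leqNgt; apply/negP => many.
  apply: (N_rare n (ltnW Nn)); rewrite /frequent_hits (bigD1 _ many) /=; left.
  by apply: (big_ind (fun A : set T => A w)) => // i; rewrite inE in_setE.
Qed.

End frequent_hits.

Theorem lemma2p2 (R : realType) (m : R) (hm : 1 / 2 < m) :
  exists2 r : R, 0 < r &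
  forall (d : measure_display) (T : measurableType d) (P : probability T R)
    (X : nat -> T -> R),
    (forall i, measurable_fun setT (X i)) ->
    (forall i (A : set R), measurable A -> P (X i @^-1` A) = pvii_law m A) ->
    mutually_independent P X ->
    {ae P, forall w, exists N : nat, forall n : nat, (N < n)%N ->
       frechet_mean_set X n w `<=` `[- r, r]}.
Proof.
(* K is read off the tail of one realisation of [pvii_law m]; that such a
   realisation exists is where [1/2 < m] matters. *)
have [[d0 [T0 [P0 [Y [mY lawY]]]]]|no_model] := pselect
  (exists d (T : measurableType d) (P : probability T R) (Y : T -> R),
     measurable_fun setT Y /\
     forall A, measurable A -> P (Y @^-1` A) = pvii_law m A); last first.
  exists 1 => // d T P X mX lawX _; exfalso; apply: no_model.
  by exists d, T, P, (X 0%N); split => //; exact: lawX.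
have eps_gt0 : 0 < (2^-1) ^+ 8 :> R by rewrite exprn_gt0 // invr_gt0.
have [K tailK] := tail_prob_small P0 mY eps_gt0.
exists (4 * (1 + K ^+ 2)); first by rewrite mulr_gt0 ?oneDsqr_gt0.
move=> d T P X mX lawX indX.
have tailX i : (P (X i @^-1` [set x | (K < `|x|)%R]) <= ((2^-1) ^+ 8)%:E)%E.
  rewrite lawX; last exact: measurable_norm_gt.
  by rewrite lawY in tailK; last exact: measurable_norm_gt.
move: (ae_eventually_rare_hits mX (measurable_norm_gt K) indX tailX).
apply: filterS => w [N rare]; exists N => n Nn.
apply: frechet_mean_set_sub_itv; first exact: leq_ltn_trans Nn.
suff <- : [set i : 'I_n | X i w \in [set x | (K < `|x|)%R]%classic]%SET =
          [set i : 'I_n | (K < `|X i w|)%R]%SET by exact: rare.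
by apply/setP => i; rewrite !inE mem_setE.
Qed.
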